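(* Let $(S_n)_{n\ge0}=((S_n^{(1)},S_n^{(2)}))_{n\ge 0}$ be a random walk in $\mathbb Z^2$ with $S_0=(0,0)$ and i.i.d. increments $\mathcal X_k$ satisfying $$P(\mathcal X_k=(1,0))=\omega,\quad P(\mathcal X_k=(-1,0))=\varepsilon,\quad P(\mathcal X_k=(0,1))=\gamma,\quad P(\mathcal X_k=(0,-1))=\delta,$$ where $\omega,\varepsilon,\gamma,\delta\ge0$ and $\omega+\varepsilon+\gamma+\delta=1$. Then for every $n\ge1$, $x=0,1,\dots,n$ and $-n\le y\le n$, $$P\big(S_n^{(2)}=y\mid S_n^{(1)}=x\big)=P\big(S_n^{(2)}=y\mid S_n^{(1)}=-x\big).$$
   Context: Conditional probabilities are considered for conditioning events of positive probability. *)

From HB Require Import structures.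
From mathcomp Require Import all_boot all_order all_algebra.
From mathcomp Require Import reals.
Set Implicit Arguments. Unset Strict Implicit. Unset Printing Implicit Defensive.
Import Order.TTheory GRing.Theory Num.Theory.
Local Open Scope ring_scope.

Definition incr (i : 'I_4) : int * int :=
  match val i with
  | 0%N => (1, 0)
  | 1%N => (-1, 0)
  | 2%N => (0, 1)
  | _ => (0, -1)
  end.

Definition stepP {R : realType} (w e g d : R) (i : 'I_4) : R :=
  match val i with
  | 0%N => w
  | 1%N => e
  | 2%N => g
  | _ => d
  end.

(* A trajectory of length n: the sequence of the increments X_1..X_n. *)
Definition walk n := {ffun 'I_n -> 'I_4}.

Definition S1 n (s : walk n) : int := \sum_(k < n) (incr (s k)).1.
Definition S2 n (s : walk n) : int := \sum_(k < n) (incr (s k)).2.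

(* Law of (X_1,...,X_n) for i.i.d. increments: product measure. *)
Definition prob {R : realType} (w e g d : R) {n} (A : pred (walk n)) : R :=
  \sum_(s : walk n | A s) \prod_(k < n) stepP w e g d (s k).

Definition cprob {R : realType} (w e g d : R) {n} (B A : pred (walk n)) : R :=
  prob w e g d (predI B A) / prob w e g d A.

(* Reflecting a trajectory in the vertical axis (exchanging east and west
   steps) negates S^(1), preserves S^(2), and multiplies the weight of the
   trajectory by (e/w)^(S^(1)).  Hence, for any event B invariant under the
   reflection, P(B, S^(1) = x) = (w/e)^x P(B, S^(1) = -x); the common factor
   cancels in the conditional probability.  Positivity of both conditioning
   events forces w and e to be nonzero. *)
From mathcomp Require Import all_boot all_order all_algebra.
From mathcomp Require Import reals.
Import Order.TTheory GRing.Theory Num.Theory.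
Local Open Scope ring_scope.
Set Implicit Arguments. Unset Strict Implicit.

Definition east : 'I_4 := @Ordinal 4 0 isT.
Definition west : 'I_4 := @Ordinal 4 1 isT.

Definition reflect_step (i : 'I_4) : 'I_4 :=
  if i == east then west else if i == west then east else i.

Lemma reflect_stepK : involutive reflect_step.
Proof. by case=> [[|[|[|[|?]]]] Hi] //; apply/val_inj. Qed.

Lemma incr_reflect_step i :
  incr (reflect_step i) = (- (incr i).1, (incr i).2).
Proof. by case: i => [[|[|[|[|?]]]] Hi]. Qed.

Definition reflect_walk n (s : walk n) : walk n := [ffun k => reflect_step (s k)].

Lemma reflect_walkK n : involutive (@reflect_walk n).
Proof. by move=> s; apply/ffunP=> k; rewrite !ffunE reflect_stepK. Qed.

Lemma S1_reflect n (s : walk n) : S1 (reflect_walk s) = - S1 s.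
Proof.
by rewrite /S1 -sumrN; apply: eq_bigr => k _; rewrite ffunE incr_reflect_step.
Qed.

Lemma S2_reflect n (s : walk n) : S2 (reflect_walk s) = S2 s.
Proof. by rewrite /S2; apply: eq_bigr => k _; rewrite ffunE incr_reflect_step. Qed.

Lemma S1_gt0_has_east n (s : walk n) : 0 < S1 s -> exists k, s k = east.
Proof.
have [/existsP[k /eqP]|/existsPn no_east] := boolP [exists k, s k == east].
  by exists k.
suff : S1 s <= 0 by rewrite leNgt => /negPf ->.
apply: sumr_le0 => k _; move: (no_east k).
by case: (s k) => [[|[|[|[|?]]]] Hi].
Qed.

Lemma S1_lt0_has_west n (s : walk n) : S1 s < 0 -> exists k, s k = west.
Proof.
rewrite -oppr_gt0 -S1_reflect => /S1_gt0_has_east[k].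
by rewrite ffunE => /(congr1 reflect_step); rewrite reflect_stepK; exists k.
Qed.

Section Weights.
Variables (R : realType) (w e g d : R).

Lemma prob_eq0_of_forced_step n (A : pred (walk n)) i :
  stepP w e g d i = 0 -> (forall s, A s -> exists k, s k = i) -> prob w e g d A = 0.
Proof.
move=> step0 forced; apply: big1 => s /forced[k sk].
by rewrite (bigD1 k) //= sk step0 mul0r.
Qed.

Lemma w_neq0_of_prob_S1 n (z : int) :
  prob w e g d (fun s : walk n => S1 s == z) != 0 -> 0 < z -> w != 0.
Proof.
move=> + z_gt0; apply: contraNneq => w0.
by apply/eqP/(prob_eq0_of_forced_step (i := east)) => // s /eqP sz;
  apply: S1_gt0_has_east; rewrite sz.
Qed.

Lemma e_neq0_of_prob_S1 n (z : int) :
  prob w e g d (fun s : walk n => S1 s == z) != 0 -> z < 0 -> e != 0.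
Proof.
move=> + z_lt0; apply: contraNneq => e0.
by apply/eqP/(prob_eq0_of_forced_step (i := west)) => // s /eqP sz;
  apply: S1_lt0_has_west; rewrite sz.
Qed.

Hypotheses (w0 : w != 0) (e0 : e != 0).

Lemma ratio_unit : w / e \is a GRing.unit.
Proof. by rewrite unitfE mulf_neq0 ?invr_eq0. Qed.

Lemma stepP_reflect i :
  stepP w e g d i = (w / e) ^ (incr i).1 * stepP w e g d (reflect_step i).
Proof.
case: i => [[|[|[|[|?]]]] Hi]; rewrite /stepP /= ?expr0z ?mul1r //.
- by rewrite expr1z mulfVK.
- by rewrite exprN1 invf_div mulfVK.
Qed.

Lemma weight_reflect n (s : walk n) :
  \prod_(k < n) stepP w e g d (s k)
  = (w / e) ^ S1 s * \prod_(k < n) stepP w e g d (reflect_walk s k).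
Proof.
rewrite /S1 (big_morph (fun z : int => (w / e) ^ z) (exprzDr ratio_unit) (expr0z _)).
by rewrite -big_split; apply: eq_bigr => k _; rewrite ffunE /= -stepP_reflect.
Qed.

Lemma prob_S1_reflect n (B : pred (walk n)) (z : int) :
  (forall s, B (reflect_walk s) = B s) ->
  prob w e g d (fun s => B s && (S1 s == z))
  = (w / e) ^ z * prob w e g d (fun s => B s && (S1 s == - z)).
Proof.
move=> B_reflect; rewrite /prob mulr_sumr.
rewrite [RHS](reindex_inj (can_inj (@reflect_walkK n))) /=.
apply: eq_big => [s | s /andP[_ /eqP <-]]; last exact: weight_reflect.
by rewrite B_reflect S1_reflect eqr_opp.
Qed.

End Weights.

Theorem theorem1 (R : realType) (w e g d : R)
  (hw : 0 <= w) (he : 0 <= e) (hg : 0 <= g) (hd : 0 <= d)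
  (hsum : w + e + g + d = 1)
  (n x : nat) (y : int)
  (hn : (1 <= n)%N) (hx : (x <= n)%N)
  (hy1 : - (n%:Z) <= y) (hy2 : y <= n%:Z)
  (hpos1 : 0 < prob w e g d (fun s : walk n => S1 s == x%:Z))
  (hpos2 : 0 < prob w e g d (fun s : walk n => S1 s == - (x%:Z))) :
  cprob w e g d (fun s : walk n => S2 s == y) (fun s : walk n => S1 s == x%:Z)
  = cprob w e g d (fun s : walk n => S2 s == y) (fun s : walk n => S1 s == - (x%:Z)).
Proof.
case: x hx hpos1 hpos2 => [|x] _ hpos1 hpos2; first by rewrite oppr0.
have w0 : w != 0 by apply: w_neq0_of_prob_S1 (lt0r_neq0 hpos1) _.
have e0 : e != 0 by apply: e_neq0_of_prob_S1 (lt0r_neq0 hpos2) _.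
pose B := fun s : walk n => S2 s == y.
have joint : prob w e g d (predI B (fun s => S1 s == x.+1%:Z))
    = (w / e) ^ x.+1 * prob w e g d (predI B (fun s => S1 s == - x.+1%:Z)).
  by apply: (prob_S1_reflect g d w0 e0) => s; rewrite /B S2_reflect.
have marginal : prob w e g d (fun s : walk n => S1 s == x.+1%:Z)
    = (w / e) ^ x.+1 * prob w e g d (fun s : walk n => S1 s == - x.+1%:Z).
  exact: (@prob_S1_reflect R w e g d w0 e0 n (fun _ => true) _ (fun _ => erefl)).
have ratio_neq0 : (w / e) ^ x.+1 != 0 by rewrite expfz_neq0 // mulf_neq0 ?invr_eq0.
by rewrite /cprob joint marginal -mulf_div divff ?mul1r.
Qed.
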